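(* Suppose users' budget and utility parameters are drawn i.i.d. from a distribution $\mathcal{D}$. Then there exists a market instance for which the expected constraint violation of the static expected equilibrium pricing algorithm (which posts the price vector $\mathbf{p}^*$ to every user, where $\mathbf{p}^*$ is computed with complete knowledge of $\mathcal{D}$) is $\Omega(\sqrt{n})$.
   Context: Online Fisher market: $m$ divisible goods, good $j$ with capacity $c_j=nd_j$, $d_j>0$; $n$ users arrive sequentially, user $t$ having budget $w_t>0$ and utility vector $\mathbf{u}_t\ge\mathbf{0}$, with $(w_t,\mathbf{u}_t)$ i.i.d. from $\mathcal{D}$ with bounded support. Given price vector $\mathbf{p}^t$, user $t$ consumes an optimal solution $\mathbf{x}_t$ of $\max \mathbf{u}_t^\top\mathbf{x}$ s.t. $(\mathbf{p}^t)^\top\mathbf{x}\le w_t$, $\mathbf{x}\ge\mathbf{0}$. The expected equilibrium price $\mathbf{p}^*$ is an optimal solution of $\min_{\mathbf{p}}\ \sum_{j=1}^m p_jd_j+\mathbb{E}_{(w,\mathbf{u})\sim\mathcal{D}}[w\log w-w\log(\min_{j\in[m]}p_j/u_j)-w]$ (equivalently, the equilibrium prices computed from the expected number of arrivals of each user type). The expected constraint violation is $V_n=\mathbb{E}[\|(\sum_{t=1}^n\mathbf{x}_t-\mathbf{c})_+\|_2]$. Asymptotics are as $n\to\infty$ with the instance fixed. *)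

From HB Require Import structures.
From mathcomp Require Import all_boot all_order all_algebra.
From mathcomp Require Import reals exp.
Set Implicit Arguments. Unset Strict Implicit. Unset Printing Implicit Defensive.
Import Order.TTheory GRing.Theory Num.Theory.
Local Open Scope ring_scope.

Section Market.
Variable R : realType.

(* A market instance: m goods with per-capita capacities d (c_j = n d_j);
   the user distribution D is a finitely supported distribution over K user
   types, type k having probability q k, budget w k, utility vector u k. *)

(* min_j p_j / u_j, with the convention p_j / 0 = +oo, written as
   (max_j u_j / p_j)^-1 (valid for p > 0, u >= 0, u <> 0). *)
Definition min_ratio (m : nat) (u p : 'I_m -> R) : R :=
  (\big[Num.max/0]_(j < m) (u j / p j))^-1.

Definition eq_objective (m K : nat) (q w : 'I_K -> R) (u : 'I_K -> 'I_m -> R)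
    (d : 'I_m -> R) (p : 'I_m -> R) : R :=
  \sum_(j < m) p j * d j
  + \sum_(k < K) q k * (w k * ln (w k) - w k * ln (min_ratio (u k) p) - w k).

Definition pos_vec (m : nat) (p : 'I_m -> R) : Prop := forall j, 0 < p j.
Definition nonneg_vec (m : nat) (x : 'I_m -> R) : Prop := forall j, 0 <= x j.

Definition expected_eq_price (m K : nat) (q w : 'I_K -> R)
    (u : 'I_K -> 'I_m -> R) (d : 'I_m -> R) (p : 'I_m -> R) : Prop :=
  pos_vec p /\
  forall p' : 'I_m -> R, pos_vec p' -> eq_objective q w u d p <= eq_objective q w u d p'.

Definition user_optimal (m : nat) (p : 'I_m -> R) (wt : R) (ut x : 'I_m -> R) : Prop :=
  nonneg_vec x /\ \sum_(j < m) p j * x j <= wt /\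
  forall y : 'I_m -> R, nonneg_vec y -> \sum_(j < m) p j * y j <= wt ->
    \sum_(j < m) ut j * y j <= \sum_(j < m) ut j * x j.

(* Expected constraint violation E[ || (sum_t x_t - n d)_+ ||_2 ] when the
   n users' types are i.i.d. with law q and user t of type k consumes
   sel t k. *)
Definition violation (m K n : nat) (q : 'I_K -> R) (d : 'I_m -> R)
    (sel : 'I_n -> 'I_K -> 'I_m -> R) : R :=
  \sum_(s : {ffun 'I_n -> 'I_K})
    (\prod_(t < n) q (s t)) *
    Num.sqrt (\sum_(j < m)
      (Num.max 0 (\sum_(t < n) sel t (s t) j - n%:R * d j)) ^+ 2).

End Market.

(** Take one good with per-user capacity 2 and two equally likely user types
    with unit utility and budgets 1 and 3.  The expected equilibrium price is
    1 (the program reduces to minimising 2p - 2 ln p), so every user spends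
    her whole budget on the good and the excess demand after n users is a
    simple symmetric random walk S_n.  The violation is E[S_n^+] = E|S_n|/2,
    and the quartic minorant |x| >= (3/2) b x^2 - (1/2) b^3 x^4 with
    b = 1/(2 sqrt n), together with E S_n^2 = n and E S_n^4 = 3n^2 - 2n,
    gives E|S_n| >= (9/16) sqrt n. *)
From HB Require Import structures.
From mathcomp Require Import all_boot all_order all_algebra.
From mathcomp Require Import reals exp.
From mathcomp Require Import ring lra.
Import Order.TTheory GRing.Theory Num.Theory.
Set Implicit Arguments. Unset Strict Implicit.
Local Open Scope ring_scope.

Lemma max0r_halves (R : realFieldType) (x : R) : Num.max 0 x = 2^-1 * x + 2^-1 * `|x|.
Proof. by case: ger0P => _; lra. Qed.

Lemma quartic_le_norm (R : realFieldType) (b x : R) :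
  0 < b -> 3/2 * b * x ^+ 2 - 2^-1 * b ^+ 3 * x ^+ 4 <= `|x|.
Proof.
move=> b_gt0; have x_ge0 := normr_ge0 x.
have x2E : x ^+ 2 = `|x| ^+ 2 by rewrite real_normK ?num_real.
have x4E : x ^+ 4 = (`|x| ^+ 2) ^+ 2 by rewrite -x2E -exprM.
(* |x| - (3/2) b |x|^2 + (1/2) b^3 |x|^4 = |x| (b |x| - 1)^2 (b |x| + 2) / 2 *)
have : 0 <= `|x| * (b * `|x| - 1) ^+ 2 * (b * `|x| + 2).
  apply: mulr_ge0; first exact: mulr_ge0 x_ge0 (sqr_ge0 _).
  by rewrite addr_ge0 // mulr_ge0 // ltW.
by rewrite x4E x2E; nra.
Qed.

Section WalkExpectation.
Variables (R : numDomainType) (K : nat) (q xi : 'I_K -> R).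

Definition walk_expect (n : nat) (g : R -> R) : R :=
  \sum_(s : {ffun 'I_n -> 'I_K}) (\prod_(t < n) q (s t)) * g (\sum_(t < n) xi (s t)).

Definition ffun_cons n (p : 'I_K * {ffun 'I_n -> 'I_K}) : {ffun 'I_n.+1 -> 'I_K} :=
  [ffun i => oapp p.2 p.1 (unlift ord0 i)].

Definition ffun_uncons n (s : {ffun 'I_n.+1 -> 'I_K}) : 'I_K * {ffun 'I_n -> 'I_K} :=
  (s ord0, [ffun i => s (lift ord0 i)]).

Lemma ffun_cons0 n k (s : {ffun 'I_n -> 'I_K}) : ffun_cons (k, s) ord0 = k.
Proof. by rewrite ffunE unlift_none. Qed.

Lemma ffun_cons_lift n k (s : {ffun 'I_n -> 'I_K}) i : ffun_cons (k, s) (lift ord0 i) = s i.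
Proof. by rewrite ffunE liftK. Qed.

Lemma ffun_consK n : cancel (@ffun_cons n) (@ffun_uncons n).
Proof.
move=> [k s]; rewrite /ffun_uncons ffun_cons0; congr (_, _).
by apply/ffunP => i; rewrite ffunE ffun_cons_lift.
Qed.

Lemma ffun_unconsK n : cancel (@ffun_uncons n) (@ffun_cons n).
Proof.
move=> s; apply/ffunP => i; rewrite ffunE.
by case: unliftP => [j ->|->] /=; rewrite ?ffunE.
Qed.

Lemma walk_expect0 g : walk_expect 0 g = g 0.
Proof.
rewrite /walk_expect (big_pred1 (ffun0 (card_ord 0))).
  by rewrite !big_ord0 mul1r.
by move=> s /=; symmetry; apply/eqP/ffunP => -[].
Qed.

Lemma walk_expectS n g :
  walk_expect n.+1 g = walk_expect n (fun x => \sum_(k < K) q k * g (xi k + x)).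
Proof.
rewrite /walk_expect (reindex (@ffun_cons n)); last first.
  by exists (@ffun_uncons n) => s _; [apply: ffun_consK | apply: ffun_unconsK].
rewrite -(pair_bigA _ (fun k s => (\prod_(t < n.+1) q (ffun_cons (k, s) t)) *
   g (\sum_(t < n.+1) xi (ffun_cons (k, s) t)))) exchange_big.
apply: eq_bigr => s _; rewrite mulr_sumr; apply: eq_bigr => k _.
rewrite big_ord_recl [X in g X]big_ord_recl ffun_cons0.
under eq_bigr do rewrite ffun_cons_lift.
under [X in g (_ + X)]eq_bigr do rewrite ffun_cons_lift.
by rewrite -mulrA mulrCA.
Qed.

Lemma eq_walk_expect n g h : g =1 h -> walk_expect n g = walk_expect n h.
Proof. by move=> gh; apply: eq_bigr => s _; rewrite gh. Qed.

Lemma walk_expectD n g h :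
  walk_expect n (fun x => g x + h x) = walk_expect n g + walk_expect n h.
Proof. by rewrite /walk_expect -big_split; apply: eq_bigr => s _; rewrite mulrDr. Qed.

Lemma walk_expectB n g h :
  walk_expect n (fun x => g x - h x) = walk_expect n g - walk_expect n h.
Proof. by rewrite /walk_expect -sumrB; apply: eq_bigr => s _; rewrite mulrBr. Qed.

Lemma walk_expectZ n c g : walk_expect n (fun x => c * g x) = c * walk_expect n g.
Proof. by rewrite /walk_expect mulr_sumr; apply: eq_bigr => s _; rewrite mulrCA. Qed.

Hypothesis q_ge0 : forall k, 0 <= q k.
Hypothesis q_sum1 : \sum_(k < K) q k = 1.

Lemma le_walk_expect n g h : (forall x, g x <= h x) -> walk_expect n g <= walk_expect n h.
Proof.
move=> gh; apply: ler_sum => s _; apply: ler_wpM2l (gh _).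
exact: prodr_ge0.
Qed.

Lemma walk_expect_cst n c : walk_expect n (fun _ => c) = c.
Proof.
elim: n => [|n IHn]; first exact: walk_expect0.
by rewrite walk_expectS -{2}IHn; apply: eq_walk_expect => x; rewrite -mulr_suml q_sum1 mul1r.
Qed.

End WalkExpectation.

Section SimpleRandomWalk.
Variable R : realType.

Definition fair_coin : 'I_2 -> R := fun _ => 2^-1.
Definition pm_one (k : 'I_2) : R := 2 * (k : nat)%:R - 1.

Local Notation E := (walk_expect fair_coin pm_one).

Lemma fair_coin_ge0 k : 0 <= fair_coin k.
Proof. by rewrite /fair_coin invr_ge0. Qed.

Lemma fair_coin_sum1 : \sum_(k < 2) fair_coin k = 1.
Proof. by rewrite !big_ord_recr big_ord0 /= /fair_coin; lra. Qed.

Lemma pm_one_stepE g x :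
  \sum_(k < 2) fair_coin k * g (pm_one k + x) = 2^-1 * g (x - 1) + 2^-1 * g (x + 1).
Proof.
rewrite !big_ord_recr big_ord0 /= add0r /fair_coin /pm_one /=.
by congr (_ * g _ + _ * g _); lra.
Qed.

Lemma walk_expectS_fair n g h :
  (forall x, 2^-1 * g (x - 1) + 2^-1 * g (x + 1) = h x) -> E n.+1 g = E n h.
Proof. by move=> ghE; rewrite walk_expectS; apply: eq_walk_expect => x; rewrite pm_one_stepE. Qed.

Lemma walk_mean n : E n id = 0.
Proof.
elim: n => [|n IHn]; first exact: walk_expect0.
by rewrite (@walk_expectS_fair _ _ id) // => x /=; lra.
Qed.

Lemma walk_second_moment n : E n (fun x => x ^+ 2) = n%:R.
Proof.
elim: n => [|n IHn]; first by rewrite walk_expect0 expr0n.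
rewrite (@walk_expectS_fair _ _ (fun x => x ^+ 2 + 1)); last by move=> x; field.
by rewrite walk_expectD IHn walk_expect_cst ?fair_coin_sum1 // -natr1.
Qed.

Lemma walk_fourth_moment n : E n (fun x => x ^+ 4) = 3 * n%:R ^+ 2 - 2 * n%:R.
Proof.
elim: n => [|n IHn]; first by rewrite walk_expect0 !expr0n /=; ring.
rewrite (@walk_expectS_fair _ _ (fun x => x ^+ 4 + (6 * x ^+ 2 + 1))); last by move=> x; field.
rewrite !walk_expectD walk_expectZ IHn walk_second_moment.
by rewrite walk_expect_cst ?fair_coin_sum1 // -natr1; ring.
Qed.

Lemma walk_abs_ge n : 9/16 * Num.sqrt n%:R <= E n (fun x => `|x|).
Proof.
case: n => [|n]; first by rewrite walk_expect0 normr0 sqrtr0 mulr0.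
set r := Num.sqrt n.+1%:R.
have r_gt0 : 0 < r by rewrite sqrtr_gt0 ltr0n.
have nE : n.+1%:R = r ^+ 2 by rewrite sqr_sqrtr // ler0n.
have b_gt0 : 0 < (2 * r)^-1 by rewrite invr_gt0 mulr_gt0.
apply: le_trans (le_walk_expect _ fair_coin_ge0 _ (fun x => quartic_le_norm x b_gt0)).
rewrite walk_expectB !walk_expectZ walk_second_moment walk_fourth_moment nE.
have -> : 3/2 * (2 * r)^-1 * r ^+ 2 - 2^-1 * (2 * r)^-1 ^+ 3 * (3 * (r ^+ 2) ^+ 2 - 2 * r ^+ 2)
    = 9/16 * r + (8 * r)^-1 by field; lra.
by rewrite lerDl invr_ge0 mulr_ge0 // ltW.
Qed.

Lemma walk_pos_part_ge n : 9/32 * Num.sqrt n%:R <= E n (fun x => Num.max 0 x).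
Proof.
under eq_walk_expect do rewrite max0r_halves.
rewrite walk_expectD !walk_expectZ walk_mean.
by have := walk_abs_ge n; lra.
Qed.

End SimpleRandomWalk.

Section LowerBoundInstance.
Variable R : realType.

Definition budget (k : 'I_2) : R := 1 + 2 * (k : nat)%:R.
Definition unit_utility : 'I_2 -> 'I_1 -> R := fun _ _ => 1.
Definition capacity : 'I_1 -> R := fun _ => 2.

Lemma budget_gt0 k : 0 < budget k.
Proof. by rewrite /budget ltr_pwDl // mulr_ge0. Qed.

Lemma min_ratio_unit (p : 'I_1 -> R) : 0 < p ord0 -> min_ratio (fun _ => 1) p = p ord0.
Proof.
move=> p_gt0; rewrite /min_ratio big_ord_recl big_ord0 max_l.
  by rewrite div1r invrK.
by rewrite ltW // divr_gt0.
Qed.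

Lemma eq_objectiveE (p : 'I_1 -> R) : pos_vec p ->
  eq_objective (fair_coin R) budget unit_utility capacity p
    = 2 * p ord0 - 2 * ln (p ord0) + (2^-1 * (3 * ln 3) - 2).
Proof.
move=> p_pos; rewrite /eq_objective big_ord1 !big_ord_recl big_ord0 /unit_utility.
rewrite !min_ratio_unit // /fair_coin /capacity /budget /= mulr0 mulr1 addr0 ln1.
have -> : 1 + 2 = 3 :> R by lra.
lra.
Qed.

Lemma expected_eq_priceE (p : 'I_1 -> R) :
  expected_eq_price (fair_coin R) budget unit_utility capacity p <-> forall j, p j = 1.
Proof.
have one_pos : pos_vec (fun _ : 'I_1 => 1 : R) by move=> j; exact: ltr01.
split=> [[p_pos p_opt] j | p1].
  have := p_opt _ one_pos; rewrite !eq_objectiveE // ln1 => p_le1.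
  rewrite (ord1 j); apply/eqP/negPn/negP => p_neq1.
  have /expR_gt1Dx : ln (p ord0) != 0 by rewrite ln_eq0.
  by rewrite lnK ?posrE //; lra.
have p_pos : pos_vec p by move=> j; rewrite p1.
split=> // p' p'_pos; rewrite !eq_objectiveE // p1 ln1.
by have := expR_ge1Dx (ln (p' ord0)); rewrite lnK ?posrE //; lra.
Qed.

Lemma user_optimal_unit_price (p : 'I_1 -> R) k (x : 'I_1 -> R) : (forall j, p j = 1) ->
  user_optimal p (budget k) (unit_utility k) x -> x ord0 = budget k.
Proof.
move=> p1 [x_ge0 [x_budget x_opt]].
have := x_opt (fun _ => budget k) (fun _ => ltW (budget_gt0 k)).
rewrite !big_ord1 /unit_utility p1 !mul1r in x_budget *.
by move=> /(_ (lexx _)); lra.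
Qed.

Lemma violation_walk n (sel : 'I_n -> 'I_2 -> 'I_1 -> R) :
  (forall t k, sel t k ord0 = budget k) ->
  violation (fair_coin R) capacity sel
    = walk_expect (fair_coin R) (pm_one R) n (fun x => Num.max 0 x).
Proof.
move=> selE; apply: eq_bigr => s _; congr (_ * _).
rewrite big_ord1 sqrtr_sqr ger0_norm ?le_max ?lexx //; congr (Num.max 0 _).
under eq_bigr do rewrite selE.
have -> : n%:R * capacity ord0 = \sum_(t < n) 2 by rewrite sumr_const card_ord mulr_natl.
by rewrite -sumrB; apply: eq_bigr => t _; rewrite /budget /pm_one; lra.
Qed.

End LowerBoundInstance.

Theorem corollary1 (R : realType) :
  exists (m K : nat) (q w : 'I_K -> R) (u : 'I_K -> 'I_m -> R) (d : 'I_m -> R),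
    [/\ ((0 < m)%N /\ forall j, 0 < d j),
        ((forall k, 0 <= q k) /\ \sum_(k < K) q k = 1),
        ((forall k, 0 < w k) /\ (forall k j, 0 <= u k j) /\
         (forall k, exists j, 0 < u k j)),
        (exists pstar, expected_eq_price q w u d pstar) &
        exists (c : R) (N : nat), 0 < c /\
          forall pstar : 'I_m -> R, expected_eq_price q w u d pstar ->
          forall (n : nat) (sel : 'I_n -> 'I_K -> 'I_m -> R),
            (forall t k, user_optimal pstar (w k) (u k) (sel t k)) ->
            (N <= n)%N ->
            c * Num.sqrt (n%:R) <= violation q d sel].
Proof.
exists 1%N, 2%N, (@fair_coin R), (@budget R), (@unit_utility R), (@capacity R); split.
- by split=> // j; rewrite /capacity.
- by split; [exact: fair_coin_ge0 | exact: fair_coin_sum1].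
- by split; [exact: budget_gt0 | split=> [k j|k]; [|exists ord0]; rewrite /unit_utility].
- by exists (fun _ => 1); apply/expected_eq_priceE.
exists (9/32), 0%N; split=> [|pstar /expected_eq_priceE p1 n sel sel_opt _]; first lra.
rewrite violation_walk; first exact: walk_pos_part_ge.
by move=> t k; apply: user_optimal_unit_price p1 _.
Qed.
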